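(* Let $n, C \in \mathbb{Z}_{+}$, let $\bm{x}_i \in \mathbb{R}^n$, and let $\bm{v}_1, \dots, \bm{v}_C \in \mathbb{R}^n$ be such that $\|\bm{x}_i - \bm{v}_j\|_2 > 0$ for all $j \in \{1,\dots,C\}$. For a fuzzy factor $r \in (1, +\infty)$ define the fuzzy membership degrees $$u_{ij} = u_{ij}(r) = \frac{1}{\sum_{k=1}^{C}\left(\frac{\|\bm{x}_i-\bm{v}_j\|_2^2}{\|\bm{x}_i-\bm{v}_k\|_2^2}\right)^{\frac{1}{r-1}}}, \qquad j = 1,\dots,C.$$ Then $$\lim_{r\rightarrow 1^{+}}\left(\sum_{j=1}^C (u_{ij})^r\,\|\bm{x}_i-\bm{v}_j\|_2^2\right) = \min_{j\in\{1,\dots,C\}}\|\bm{x}_i-\bm{v}_j\|_2^2 .$$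
   Context: This concerns fuzzy clustering, which solves $\min_{\mathbf{U},\mathbf{V}}\sum_{j=1}^C\sum_{i=1}^M (u_{ij})^r\|\bm{x}_i-\bm{v}_j\|_2^2$ subject to $\sum_{j=1}^C u_{ij}=1$, $u_{ij}\in[0,1]$, over data points $\bm{x}_1,\dots,\bm{x}_M\in\mathbb{R}^n$, clustering centroids $\mathbf{V}=\{\bm{v}_j\}_{j=1}^C$ and membership matrix $\mathbf{U}=[u_{ij}]$; for fixed centroids, the optimal memberships are given by the closed-form expression in the claim. The claim concerns the contribution of a single data point $\bm{x}_i$ to the objective at these optimal memberships. *)

From mathcomp Require Import all_boot all_order all_algebra.
From mathcomp Require Import all_classical all_reals all_analysis.
Set Implicit Arguments. Unset Strict Implicit. Unset Printing Implicit Defensive.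
Import Order.TTheory GRing.Theory Num.Theory.
Local Open Scope ring_scope.

Definition sqdist (R : realType) (n : nat) (x v : 'rV[R]_n) : R :=
  \sum_(k < n) (x ord0 k - v ord0 k) ^+ 2.

Definition fuzzy_u (R : realType) (n C : nat) (x : 'rV[R]_n)
    (v : 'I_C -> 'rV[R]_n) (r : R) (j : 'I_C) : R :=
  (\sum_(k < C) powR (sqdist x (v j) / sqdist x (v k)) (r - 1)^-1)^-1.

Definition fuzzy_contrib (R : realType) (n C : nat) (x : 'rV[R]_n)
    (v : 'I_C -> 'rV[R]_n) (r : R) : R :=
  \sum_(j < C) powR (fuzzy_u x v r j) r * sqdist x (v j).

(* With s = 1/(r-1), t_k = (m/d_k)^s for the minimal distance m and T = sum_k t_k,
   the memberships are u_j = t_j / T, and since t_j^r d_j = m t_j the whole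
   contribution collapses to m / T^(r-1).  As 1 <= T <= C, it is squeezed between
   m / C^(r-1) and m, both of which tend to m as r -> 1+. *)
From mathcomp Require Import all_boot all_order all_algebra.
From mathcomp Require Import all_classical all_reals all_analysis.
From mathcomp Require Import ring.
Set Implicit Arguments. Unset Strict Implicit. Unset Printing Implicit Defensive.
Import Order.TTheory GRing.Theory Num.Theory numFieldNormedType.Exports.
Local Open Scope classical_set_scope.
Local Open Scope ring_scope.

Lemma powRV (R : realType) (a x : R) : 0 <= a -> powR (a^-1) x = (powR a x)^-1.
Proof. by move=> a0; rewrite -powR_inv1 // powRAC powR_inv1 // powR_ge0. Qed.

Lemma continuous_powRr (R : realType) (a : R) : 0 < a -> continuous (powR a).
Proof.
move=> a0 p; rewrite /powR gt_eqF //.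
apply: (@cvg_comp _ _ _ (fun x => x * ln a) expR); last exact: continuous_expR.
by apply: cvgMr_tmp; exact: cvg_id.
Qed.

Lemma powR_subr1_cvg (R : realType) (a : R) :
  0 < a -> powR a (r - 1) @[r --> (1:R)] --> (1:R).
Proof.
move=> a_gt0.
have sub1_cvg : r - 1 @[r --> (1:R)] --> (0:R).
  rewrite -[X in _ --> X](subrr (1:R)).
  by apply: cvgB; [exact: cvg_id | exact: cvg_cst].
rewrite -[X in _ --> X](powRr0 a).
exact: cvg_comp sub1_cvg (@continuous_powRr R a a_gt0 0).
Qed.

Lemma div_powR_sandwich (R : realType) (m T N p : R) :
  0 < m -> 1 <= T <= N -> 0 <= p -> m / powR N p <= m / powR T p <= m.
Proof.
move=> m_gt0 /andP[T1 TN] p_ge0.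
have T_gt0 : 0 < T := lt_le_trans ltr01 T1.
have PT1 : 1 <= powR T p by rewrite -[leLHS](powRr0 T); exact: ler_powR.
have PTN : powR T p <= powR N p.
  by apply: ge0_ler_powR; rewrite // nnegrE ltW // (lt_le_trans T_gt0).
apply/andP; split.
  by rewrite ler_pM2l // lef_pV2 ?posrE ?powR_gt0 // (lt_le_trans T_gt0).
by rewrite ler_pdivrMr ?(lt_le_trans ltr01) // ler_peMr // ltW.
Qed.

Lemma bigmin_idx_eq_min (disp : Order.disp_t) (T : orderType disp)
    (I : finType) (F : I -> T) (i0 j0 : I) :
  (forall i, (F j0 <= F i)%O) -> \big[Order.min/F i0]_i F i = F j0.
Proof.
move=> j0_min; apply/le_anti; rewrite bigmin_le /=.
by apply/bigmin_geP; split=> [|i _]; exact: j0_min.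
Qed.

Section RatioPowSum.
Variables (R : realType) (I : finType) (d : I -> R).
Hypothesis d_gt0 : forall k, 0 < d k.

Definition ratio_pow_sum (j : I) (s : R) : R := \sum_k powR (d j / d k) s.

Lemma ratio_pow_sum_ge1 j s : 1 <= ratio_pow_sum j s.
Proof.
rewrite /ratio_pow_sum (bigD1 j) //= divff ?gt_eqF // powR1 lerDl.
by apply: sumr_ge0 => k _; exact: powR_ge0.
Qed.

Lemma ratio_pow_sum_gt0 j s : 0 < ratio_pow_sum j s.
Proof. exact: lt_le_trans ltr01 (ratio_pow_sum_ge1 j s). Qed.

Lemma ratio_pow_sum_le_card j s :
  0 <= s -> (forall k, d j <= d k) -> ratio_pow_sum j s <= #|I|%:R.
Proof.
move=> s0 j_min; rewrite -sum1_card natr_sum; apply: ler_sum => k _.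
rewrite -(powRr0 (d j / d k)) ger_powR // divr_gt0 //=.
by rewrite ler_pdivrMr ?mul1r.
Qed.

Lemma ratio_pow_sum_rebase j0 j s :
  ratio_pow_sum j s = ratio_pow_sum j0 s / powR (d j0 / d j) s.
Proof.
rewrite /ratio_pow_sum mulr_suml; apply: eq_bigr => k _.
have -> : d j / d k = (d j0 / d k) * (d j0 / d j)^-1.
  by field; rewrite !gt_eqF.
by rewrite powRM ?powRV ?invr_ge0 ?divr_ge0 ?ltW.
Qed.

Lemma fuzzy_objective_closed_form j0 r : 1 < r ->
  \sum_j powR ((ratio_pow_sum j (r - 1)^-1)^-1) r * d j =
  d j0 / powR (ratio_pow_sum j0 (r - 1)^-1) (r - 1).
Proof.
move=> r1; set s := (r - 1)^-1; set T := ratio_pow_sum j0 s.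
set t := fun k => powR (d j0 / d k) s.
have t_gt0 k : 0 < t k by rewrite powR_gt0 ?divr_gt0.
have T_gt0 : 0 < T := ratio_pow_sum_gt0 j0 s.
have sr : s * r = 1 + s by rewrite /s; field; rewrite subr_eq0 gt_eqF.
have term j : powR ((ratio_pow_sum j s)^-1) r * d j = d j0 * t j / powR T r.
  have tjr_dj : powR (t j) r * d j = d j0 * t j.
    rewrite /t -powRrM sr powRD; last by apply/implyP => _; rewrite gt_eqF ?divr_gt0.
    by rewrite powRr1 ?divr_ge0 ?ltW //; field; rewrite gt_eqF.
  rewrite (ratio_pow_sum_rebase j0) -/T -/(t j) invf_div.
  by rewrite powRM ?invr_ge0 ?ltW // powRV ?ltW // mulrAC tjr_dj.
under eq_bigr do rewrite term.
rewrite -mulr_suml -mulr_sumr -/(ratio_pow_sum j0 s) -/T.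
rewrite -{1}(subrK 1 r) powRD; last by apply/implyP => _; rewrite gt_eqF.
by rewrite powRr1 ?ltW //; field; rewrite !gt_eqF ?powR_gt0.
Qed.

End RatioPowSum.

Theorem proposition1 (R : realType) (n C : nat) (x : 'rV[R]_n.+1)
    (v : 'I_C.+1 -> 'rV[R]_n.+1)
    (hpos : forall j : 'I_C.+1, 0 < sqdist x (v j)) :
  fuzzy_contrib x v r @[r --> (1:R)^'+] -->
    \big[Order.min/sqdist x (v ord0)]_(j < C.+1) sqdist x (v j).
Proof.
set d := fun j => sqdist x (v j).
have [j0 _ j0_min] := @arg_minP _ _ _ ord0 xpredT d isT.
have {}j0_min k : d j0 <= d k := j0_min k isT.
rewrite (bigmin_idx_eq_min ord0 j0_min).
set N : R := #|'I_C.+1|%:R.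
have N_gt0 : 0 < N by rewrite ltr0n card_ord.
apply: (@squeeze_cvgr _ _ _ _ (fun r => d j0 / powR N (r - 1)) (fun=> d j0)).
- near=> r; have r1 : 1 < r by near: r; exact: nbhs_right_gt.
  have s_ge0 : 0 <= (r - 1)^-1 by rewrite invr_ge0 subr_ge0 ltW.
  rewrite /fuzzy_contrib /fuzzy_u (fuzzy_objective_closed_form hpos j0 r1).
  apply: div_powR_sandwich; [exact: hpos | | by rewrite subr_ge0 ltW].
  by rewrite ratio_pow_sum_ge1 // ratio_pow_sum_le_card.
- apply: cvg_at_right_filter; rewrite -[X in _ --> X]divr1.
  apply: cvgMl_tmp; apply: (cvgV (f := fun r => powR N (r - 1))).
    exact: oner_neq0.
  exact: powR_subr1_cvg.
- exact: cvg_cst.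
Unshelve. all: end_near.
Qed.
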